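(* Let $\Lambda$ be a finite nonempty set and $\mathcal{D}\subseteq\Lambda\times2^\Lambda$. Then: (1) $\mathcal{D}\subseteq\mathcal{D}^\circ\subseteq(\mathcal{D}^\circ)^{\sf ex}\subseteq\overline{\mathcal{D}}$ and ${\sf Base}(\mathcal{D})={\sf Base}(\mathcal{D}^\circ)={\sf Base}((\mathcal{D}^\circ)^{\sf ex})$; (2) $(\mathcal{D}^\circ)^\circ=\mathcal{D}^\circ$, $(\mathcal{D}^{\sf ex})^{\sf ex}=\mathcal{D}^{\sf ex}$ and $(\Lambda^{\sf triv})^{\sf ex}=\Lambda^{\sf triv}$; (3) $(\overline{\mathcal{D}})^{\sf ex}=\overline{\mathcal{D}}$; (4) if $(b,B),(c,C)\in\overline{\mathcal{D}}$ then $(b,B)\circ(c,C)\in\overline{\mathcal{D}}$; in particular $(\overline{\mathcal{D}})^\circ=\overline{\mathcal{D}}$; (5) $\overline{\overline{\mathcal{D}}}=\overline{\mathcal{D}}$; (6) if $\mathcal{D}\subseteq{\sf Div}(U)$ for a set of monomials $U$ indexed by $\Lambda$, then $\overline{\mathcal{D}}\subseteq{\sf Div}(U)$; in particular $\overline{{\sf Div}(U)}={\sf Div}(U)$.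
   Context: For monomials $U=\{u_i:i\in\Lambda\}$ (indexed so that $u_i=u_j$ implies $i=j$), a divisibility relation on $U$ is a pair $(b,B)$, $b\in\Lambda$, $\emptyset\ne B\subseteq\Lambda$, with $u_b\mid\mathrm{lcm}(u_i:i\in B)$; ${\sf Div}(U)$ is the set of these. $(b,B)^{\sf ex}=\{(b,C):B\subseteq C\subseteq\Lambda\}$; $(b,B)\circ(c,C)=(b,(B\smallsetminus\{c\})\cup C)$ (not associative). For $\mathcal{D}\subseteq\Lambda\times2^\Lambda$: $\mathcal{D}^\circ$ is the set of all compositions $(b_1,B_1)\circ\cdots\circ(b_s,B_s)$ with $s\ge1$ and $(b_i,B_i)\in\mathcal{D}$, including all possible bracketings; $\mathcal{D}^{\sf ex}=\bigcup_{(b,B)\in\mathcal{D}}(b,B)^{\sf ex}$; $\Lambda^{\sf triv}=\{(b,B)\in\Lambda\times2^\Lambda:b\in B\}$; $\overline{\mathcal{D}}=(\mathcal{D}^\circ)^{\sf ex}\cup\Lambda^{\sf triv}$; ${\sf Base}(\mathcal{D})=\{b:(b,B)\in\mathcal{D}\text{ for some }B\}$. *)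

From mathcomp Require Import all_boot all_order.
From mathcomp Require Import boolp classical_sets.
Set Implicit Arguments. Unset Strict Implicit. Unset Printing Implicit Defensive.

(* Lambda is a finType T; a "relation" (b,B) is an element of T * {set T};
   subsets of Lambda x 2^Lambda are classical sets  set (T * {set T}). *)
Section Defs.
Variable T : finType.
Notation dpair := (T * {set T})%type.

Definition dcomp (x y : dpair) : dpair := (x.1, (x.2 :\ y.1) :|: y.2).

(* D^o : all compositions of elements of D, with all bracketings,
   i.e. the values of all binary trees with leaves in D. *)
Inductive dcirc (D : set dpair) : dpair -> Prop :=
| dcirc_base x : D x -> dcirc D x
| dcirc_comp x y : dcirc D x -> dcirc D y -> dcirc D (dcomp x y).

Definition dex1 (x : dpair) : set dpair := fun y => y.1 = x.1 /\ x.2 \subset y.2.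

Definition dex (D : set dpair) : set dpair := fun y => exists2 x, D x & dex1 x y.

Definition dtriv : set dpair := fun y => y.1 \in y.2.

Definition dbar (D : set dpair) : set dpair := dex (dcirc D) `|` dtriv.

Definition dbase (D : set dpair) : set T := fun b => exists B, D (b, B).

(* Monomials in n variables, represented by exponent vectors;
   u | v iff componentwise <=, lcm = componentwise max. *)
Definition monomial (n : nat) := {ffun 'I_n -> nat}.
Definition mdvd n (a b : monomial n) : Prop := forall k, a k <= b k.
Definition mlcm n (B : {set T}) (u : T -> monomial n) : monomial n :=
  [ffun k => \max_(i in B) u i k].

Definition Div n (u : T -> monomial n) : set dpair :=
  fun x => x.2 != finset.set0 /\ mdvd (u x.1) (mlcm x.2 u).
End Defs.

From mathcomp Require Import all_boot all_order.
From mathcomp Require Import boolp classical_sets.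
Local Open Scope classical_set_scope.
Set Implicit Arguments. Unset Strict Implicit. Unset Printing Implicit Defensive.

(** The closure [dbar D] is the least set containing [D] that is closed under
    composition, upward closed in the second component, and contains the
    trivial pairs.  Upward closedness and composition commute because
    [dcomp] is monotone in both second components, and a composition with a
    trivial factor is either trivial or lies above one of its factors.
    Minimality gives idempotence, and [Div u] has all three closure
    properties, hence contains [dbar D] whenever it contains [D]. *)

Section Closure.
Variable T : finType.
Notation dpair := (T * {set T})%type.
Implicit Types (D E : set dpair) (x y : dpair).

Definition dcomp_closed E := forall x y, E x -> E y -> E (dcomp x y).

Lemma dex1_trans x y z : dex1 x y -> dex1 y z -> dex1 x z.
Proof.
by move=> [e1 s1] [e2 s2]; split; [rewrite e2 | apply: fintype.subset_trans s2].
Qed.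

Lemma dex1_dcomp x x' y y' :
  dex1 x x' -> dex1 y y' -> dex1 (dcomp x y) (dcomp x' y').
Proof.
move=> [ex sx] [ey sy]; split=> //=.
by rewrite ey; apply: finset.setUSS => //; apply: finset.setSD.
Qed.

Lemma dex1_dcompl x y : y.1 \in y.2 -> dex1 x (dcomp x y).
Proof.
move=> yy; split=> //=; apply/fintype.subsetP=> i xi.
by rewrite !inE; case: eqP => [->|_]; rewrite ?yy ?xi ?orbT.
Qed.

Lemma dex1_dcompr x y : x.1 = y.1 -> dex1 y (dcomp x y).
Proof. by move=> exy; split; [|exact: finset.subsetUr]. Qed.

Lemma sub_dcirc D : D `<=` dcirc D.
Proof. by move=> x; apply: dcirc_base. Qed.

Lemma dcirc_comp_closed D : dcomp_closed (dcirc D).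
Proof. by move=> x y; apply: dcirc_comp. Qed.

Lemma dcirc_min D E : D `<=` E -> dcomp_closed E -> dcirc D `<=` E.
Proof. by move=> DE cE x; elim=> [y /DE | y z _ Ey _ Ez]; last exact: cE. Qed.

Lemma dcirc_id D : dcomp_closed D -> dcirc D = D.
Proof.
by move=> cD; apply/seteqP; split; [apply: dcirc_min | apply: sub_dcirc].
Qed.

Lemma dcirc_idem D : dcirc (dcirc D) = dcirc D.
Proof. exact/dcirc_id/dcirc_comp_closed. Qed.

Lemma sub_dex D : D `<=` dex D.
Proof. by move=> x Dx; exists x. Qed.

Lemma dex_id D : (forall x y, D x -> dex1 x y -> D y) -> dex D = D.
Proof.
by move=> upD; apply/seteqP; split=> [y [x Dx /(upD _ _ Dx)] | ]; last exact: sub_dex.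
Qed.

Lemma dex_idem D : dex (dex D) = dex D.
Proof.
by apply: dex_id => y z [x Dx xy] yz; exists x => //; apply: dex1_trans yz.
Qed.

Lemma dex_dtriv : dex (@dtriv T) = @dtriv T.
Proof.
by apply: dex_id => x y xx [yx /fintype.subsetP]; rewrite /dtriv yx; apply.
Qed.

Lemma dex_setU D E : dex (D `|` E) = dex D `|` dex E.
Proof.
apply/seteqP; split=> [y [x [Dx|Ex] xy] | y [[x Dx xy]|[x Ex xy]]].
- by left; exists x.
- by right; exists x.
- by exists x => //; left.
- by exists x => //; right.
Qed.

Lemma dcirc_dbase D x : dcirc D x -> dbase D x.1.
Proof. by elim=> [[b B] Dx | x' y' _ [B Dx] _ _]; exists B. Qed.

Lemma dex_dbase D y : dex D y -> dbase D y.1.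
Proof. by case=> [[b B] Dx [/= -> _]]; exists B. Qed.

Lemma dbase_dcirc D : dbase (dcirc D) = dbase D.
Proof.
apply/seteqP; split=> b [B].
  by move/dcirc_dbase.
by exists B; apply: sub_dcirc.
Qed.

Lemma dbase_dex D : dbase (dex D) = dbase D.
Proof.
apply/seteqP; split=> b [B].
  by move/dex_dbase.
by exists B; apply: sub_dex.
Qed.

Lemma sub_dbar D : D `<=` dbar D.
Proof. by move=> x Dx; left; apply/sub_dex/sub_dcirc. Qed.

Lemma dex_dcirc_sub_dbar D : dex (dcirc D) `<=` dbar D.
Proof. by move=> x; left. Qed.

Lemma dtriv_sub_dbar D : @dtriv T `<=` dbar D.
Proof. by move=> x; right. Qed.

Lemma dex_dbar D : dex (dbar D) = dbar D.
Proof. by rewrite dex_setU dex_idem dex_dtriv. Qed.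

Lemma dbar_dex1 D x y : dbar D x -> dex1 x y -> dbar D y.
Proof. by move=> Dx xy; rewrite -dex_dbar; exists x. Qed.

Lemma dbar_comp_closed D : dcomp_closed (dbar D).
Proof.
move=> [b B] [c C] Dx Dy.
have [bB|bNB] := boolP (b \in B).
  have [<-|cNb] := eqVneq c b; first by apply: dbar_dex1 Dy _; apply: dex1_dcompr.
  by right; rewrite /dtriv /= !inE eq_sym cNb bB.
have [cC|cNC] := boolP (c \in C); first by apply: dbar_dex1 Dx _; apply: dex1_dcompl.
case: Dx => [[x Dx xb]|]; last by rewrite /dtriv /= (negbTE bNB).
case: Dy => [[y Dy yc]|]; last by rewrite /dtriv /= (negbTE cNC).
by left; exists (dcomp x y); [apply: dcirc_comp | apply: dex1_dcomp].
Qed.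

Lemma dbar_min D E :
    D `<=` E -> dcomp_closed E -> dex E `<=` E -> @dtriv T `<=` E ->
  dbar D `<=` E.
Proof.
move=> DE cE exE trE y [[x Dx xy]|]; last exact: trE.
by apply: exE; exists x => //; apply: dcirc_min Dx.
Qed.

Lemma dbar_idem D : dbar (dbar D) = dbar D.
Proof.
apply/seteqP; split; last exact: sub_dbar.
apply: dbar_min => //; [exact: dbar_comp_closed | by rewrite dex_dbar |].
exact: dtriv_sub_dbar.
Qed.

Lemma dcirc_dbar D : dcirc (dbar D) = dbar D.
Proof. exact/dcirc_id/dbar_comp_closed. Qed.

Section Divisibility.
Variables (n : nat) (u : T -> monomial n).

Lemma mdvd_trans (a b c : monomial n) : mdvd a b -> mdvd b c -> mdvd a c.
Proof. by move=> ab bc k; apply: leq_trans (bc k). Qed.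

Lemma mdvd_mlcm b (B : {set T}) : b \in B -> mdvd (u b) (mlcm B u).
Proof. by move=> bB k; rewrite ffunE; apply: leq_bigmax_cond. Qed.

Lemma mlcm_dvd (B : {set T}) m :
  (forall i, i \in B -> mdvd (u i) m) -> mdvd (mlcm B u) m.
Proof. by move=> Bm k; rewrite ffunE; apply/bigmax_leqP => i /Bm. Qed.

Lemma mlcmS (B C : {set T}) : B \subset C -> mdvd (mlcm B u) (mlcm C u).
Proof. by move=> /fintype.subsetP BC; apply: mlcm_dvd => i /BC; apply: mdvd_mlcm. Qed.

Lemma dtriv_sub_Div : @dtriv T `<=` Div u.
Proof.
by move=> [b B] /= bB; split; [apply/set0Pn; exists b | apply: mdvd_mlcm].
Qed.

Lemma dex_sub_Div : dex (Div u) `<=` Div u.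
Proof.
move=> [b B] [[c C] [/= C0 uc] [/= -> CB]]; split=> /=.
  by apply: contraNneq C0 => B0; rewrite -finset.subset0 -B0.
exact: mdvd_trans uc (mlcmS CB).
Qed.

Lemma Div_comp_closed : dcomp_closed (Div u).
Proof.
move=> [b B] [c C] [/= _ ub] [/= C0 uc]; split=> /=.
  by case/set0Pn: C0 => i iC; apply/set0Pn; exists i; rewrite inE iC orbT.
apply: mdvd_trans ub (mlcm_dvd _) => i iB.
have [->|iNc] := eqVneq i c.
  by apply: mdvd_trans uc (mlcmS (finset.subsetUr _ _)).
by apply: mdvd_mlcm; rewrite !inE iNc iB.
Qed.

Lemma dbar_sub_Div D : D `<=` Div u -> dbar D `<=` Div u.
Proof. by move=> DU; apply: dbar_min DU Div_comp_closed dex_sub_Div dtriv_sub_Div. Qed.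

End Divisibility.
End Closure.

Theorem proposition2p5 (T : finType) (Lambda_nonempty : 0 < #|T|)
    (D : set (T * {set T})) :
  (* (1) *)
  (D `<=` dcirc D /\ dcirc D `<=` dex (dcirc D) /\ dex (dcirc D) `<=` dbar D /\
   dbase D = dbase (dcirc D) /\ dbase (dcirc D) = dbase (dex (dcirc D))) /\
  (* (2) *)
  (dcirc (dcirc D) = dcirc D /\ dex (dex D) = dex D /\ dex (@dtriv T) = @dtriv T) /\
  (* (3) *)
  dex (dbar D) = dbar D /\
  (* (4) *)
  ((forall x y, dbar D x -> dbar D y -> dbar D (dcomp x y)) /\
   dcirc (dbar D) = dbar D) /\
  (* (5) *)
  dbar (dbar D) = dbar D /\
  (* (6) *)
  (forall (n : nat) (u : T -> monomial n), injective u ->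
     (D `<=` Div u -> dbar D `<=` Div u) /\ dbar (Div u) = Div u).
Proof.
split.
  split; [exact: sub_dcirc | split; [exact: sub_dex | split]].
    exact: dex_dcirc_sub_dbar.
  by rewrite dbase_dex dbase_dcirc.
split; first by split; [exact: dcirc_idem | split; [exact: dex_idem | exact: dex_dtriv]].
split; first exact: dex_dbar.
split; first by split; [exact: dbar_comp_closed | exact: dcirc_dbar].
split; first exact: dbar_idem.
move=> n u _; split; first exact: dbar_sub_Div.
by apply/seteqP; split; [exact: dbar_sub_Div | exact: sub_dbar].
Qed.
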